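(* Let $\mathbf{b}\in H_{1,2,2}$ have odd norm. Let $U$ be the set of the twelve residue classes modulo $2H_{1,2,2}$ of the elements $\mathbf{v}_1,\mathbf{v}_2,\mathbf{v}_3,\mathbf{v}_4,\mathbf{v}_3-\mathbf{v}_1,\mathbf{v}_3-\mathbf{v}_2,\mathbf{v}_4-\mathbf{v}_3,\mathbf{v}_4-\mathbf{v}_1,\mathbf{v}_4-\mathbf{v}_2,\mathbf{v}_3-\mathbf{v}_2-\mathbf{v}_1,\mathbf{v}_4-\mathbf{v}_2-\mathbf{v}_1,\mathbf{v}_4+\mathbf{v}_3-\mathbf{v}_2-\mathbf{v}_1$. Then the map $\mathbf{x}\mapsto \mathbf{b}\mathbf{x}$ induces a permutation of $U$, and so does the map $\mathbf{x}\mapsto\mathbf{x}\mathbf{b}$.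
   Context: Let $\mathbf{i},\mathbf{j},\mathbf{k}$ be the standard quaternion units; $\overline{\mathbf{q}}$ is quaternion conjugation and $N(\mathbf{q})=\mathbf{q}\overline{\mathbf{q}}$. $H_{1,2,2}$ is the subring of the quaternions equal to the $\mathbb{Z}$-module generated by $\mathbf{v}_1=1$, $\mathbf{v}_2=\mathbf{i}$, $\mathbf{v}_3=\tfrac12(1+\mathbf{i}+\sqrt2\,\mathbf{j})$, $\mathbf{v}_4=\tfrac12(1+\mathbf{i}+\sqrt2\,\mathbf{k})$. The 24 units (elements of norm 1) of $H_{1,2,2}$ are $\pm$ the twelve elements listed in the claim. *)

From HB Require Import structures.
From mathcomp Require Import all_boot all_order all_algebra.
Set Implicit Arguments. Unset Strict Implicit. Unset Printing Implicit Defensive.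
Import Order.TTheory GRing.Theory Num.Theory.
Local Open Scope ring_scope.

Section Quat.
Variable R : rcfType.

(* q = q0 + q1 i + q2 j + q3 k *)
Record quat := Quat { q0 : R; q1 : R; q2 : R; q3 : R }.

Definition qadd (x y : quat) :=
  Quat (q0 x + q0 y) (q1 x + q1 y) (q2 x + q2 y) (q3 x + q3 y).
Definition qopp (x : quat) := Quat (- q0 x) (- q1 x) (- q2 x) (- q3 x).
Definition qsub (x y : quat) := qadd x (qopp y).
Definition qscale (r : R) (x : quat) := Quat (r * q0 x) (r * q1 x) (r * q2 x) (r * q3 x).

(* Hamilton product: i^2 = j^2 = k^2 = ijk = -1 *)
Definition qmul (x y : quat) :=
  Quat (q0 x * q0 y - q1 x * q1 y - q2 x * q2 y - q3 x * q3 y)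
       (q0 x * q1 y + q1 x * q0 y + q2 x * q3 y - q3 x * q2 y)
       (q0 x * q2 y - q1 x * q3 y + q2 x * q0 y + q3 x * q1 y)
       (q0 x * q3 y + q1 x * q2 y - q2 x * q1 y + q3 x * q0 y).

Definition qconj (x : quat) := Quat (q0 x) (- q1 x) (- q2 x) (- q3 x).

Definition qN (x : quat) := qmul x (qconj x).

Definition qreal (r : R) := Quat r 0 0 0.

Definition v1 := Quat 1 0 0 0.
Definition v2 := Quat 0 1 0 0.
Definition v3 := Quat (1/2) (1/2) (Num.sqrt 2 / 2) 0.
Definition v4 := Quat (1/2) (1/2) 0 (Num.sqrt 2 / 2).

Definition inH (x : quat) : Prop :=
  exists a b c d : int,
    x = qadd (qadd (qscale a%:~R v1) (qscale b%:~R v2))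
             (qadd (qscale c%:~R v3) (qscale d%:~R v4)).

Definition odd_norm (x : quat) : Prop :=
  exists n : int, odd `|n|%N /\ qN x = qreal n%:~R.

Definition cong2 (x y : quat) : Prop :=
  exists h, inH h /\ qsub x y = qscale 2 h.

Definition Ulist : seq quat :=
  [:: v1; v2; v3; v4; qsub v3 v1; qsub v3 v2; qsub v4 v3; qsub v4 v1;
      qsub v4 v2; qsub (qsub v3 v2) v1; qsub (qsub v4 v2) v1;
      qsub (qsub (qadd v4 v3) v2) v1].

Definition U (i : 'I_12) : quat := nth v1 Ulist i.

Definition induces_perm_U (f : quat -> quat) : Prop :=
  (forall x y, inH x -> inH y -> cong2 x y -> cong2 (f x) (f y)) /\
  (forall i, exists j, cong2 (f (U i)) (U j)) /\
  (forall i j, cong2 (f (U i)) (f (U j)) -> cong2 (U i) (U j)) /\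
  (forall j, exists i, cong2 (f (U i)) (U j)).

End Quat.

(** In the basis v1, v2, v3, v4, the order H_{1,2,2} is Z^4 with an integral
    multiplication, an integral conjugation and an integral norm form, and
    congruence modulo 2H_{1,2,2} is coordinatewise congruence modulo 2.  The
    twelve classes of U are exactly the classes of odd norm (the reductions of
    the units).  If N(b) is odd, then modulo 2 multiplication by b preserves
    the norm, by multiplicativity, and is invertible with inverse
    multiplication by conj(b), because conj(b) b = b conj(b) = N(b) = 1 mod 2;
    hence it permutes the classes of odd norm. *)

From mathcomp Require Import all_boot all_order all_algebra ring.
Set Implicit Arguments. Unset Strict Implicit. Unset Printing Implicit Defensive.
Import Order.TTheory GRing.Theory Num.Theory.
Local Open Scope ring_scope.

Lemma Z2_eq01 (x : 'Z_2) : x = 0 \/ x = 1.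
Proof. by case: x => [[|[|//]]] ?; [left | right]; apply: val_inj. Qed.

Lemma intr_Z2_eq0 (x : int) : ((x%:~R : 'Z_2) == 0) = (2 %| x)%Z.
Proof.
rewrite dvdzE {1}[x]intEsign rmorphM /= rmorph_sign.
have -> : (((-1) ^+ (x < 0)%R * `|x|%:R : 'Z_2) == 0) = (`|x|%:R == 0 :> 'Z_2).
  by case: (x < 0)%R; rewrite ?mulN1r ?mul1r ?oppr_eq0.
by rewrite -[_ == 0](inj_eq val_inj) /= val_Zp_nat.
Qed.

Lemma intr_Z2_eq (x y : int) : ((x%:~R : 'Z_2) == y%:~R) = (2 %| x - y)%Z.
Proof. by rewrite -subr_eq0 -rmorphB intr_Z2_eq0. Qed.

Lemma intr_Z2_odd (n : int) : odd `|n| -> (n%:~R : 'Z_2) = 1.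
Proof.
case: (Z2_eq01 n%:~R) => // /eqP.
by rewrite intr_Z2_eq0 dvdzE dvdn2 => /negbTE ->.
Qed.

Definition hcoord (T : Type) := (T * T * T * T)%type.

Definition hmap (S T : Type) (f : S -> T) (x : hcoord S) : hcoord T :=
  let: (a, b, c, d) := x in (f a, f b, f c, f d).

Section Coordinates.
Variable T : comNzRingType.
Implicit Types x y z : hcoord T.

Definition hone : hcoord T := (1, 0, 0, 0).

Definition hsub x y : hcoord T :=
  let: (a, b, c, d) := x in let: (a', b', c', d') := y in
  (a - a', b - b', c - c', d - d').

Definition hscale (k : T) x : hcoord T :=
  let: (a, b, c, d) := x in (k * a, k * b, k * c, k * d).

(* The products v_i v_j expanded in the basis v1, v2, v3, v4. *)
Definition hmul x y : hcoord T :=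
  let: (a, b, c, d) := x in let: (a', b', c', d') := y in
  (a * a' - b * b' - b * c' - c * c' - d * b' - d * c' - d * d',
   a * b' + b * a' + b * d' + c * b' + c * d' - d * c',
   a * c' - b * d' + c * a' + c * c' + d * b' + d * c',
   a * d' + b * c' - c * b' + d * a' + d * c' + d * d').

(* conj v3 = v1 - v3 and conj v4 = v1 - v4. *)
Definition hconj x : hcoord T :=
  let: (a, b, c, d) := x in (a + c + d, - b, - c, - d).

Definition hnorm x : T :=
  let: (a, b, c, d) := x in
  a * a + b * b + (a + b) * (c + d) + c * c + d * d + c * d.

Lemma hmulA : associative hmul.
Proof.
move=> [[[a b] c] d] [[[a' b'] c'] d'] [[[a'' b''] c''] d''] /=.
by congr (_, _, _, _); ring.
Qed.

Lemma hmul1x : left_id hone hmul.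
Proof. by move=> [[[a b] c] d] /=; congr (_, _, _, _); ring. Qed.

Lemma hmulx1 : right_id hone hmul.
Proof. by move=> [[[a b] c] d] /=; congr (_, _, _, _); ring. Qed.

Lemma hmul_conjl x : hmul (hconj x) x = hscale (hnorm x) hone.
Proof. by case: x => [[[a b] c] d] /=; congr (_, _, _, _); ring. Qed.

Lemma hmul_conjr x : hmul x (hconj x) = hscale (hnorm x) hone.
Proof. by case: x => [[[a b] c] d] /=; congr (_, _, _, _); ring. Qed.

Lemma hnormM x y : hnorm (hmul x y) = hnorm x * hnorm y.
Proof. by case: x y => [[[a b] c] d] [[[a' b'] c'] d'] /=; ring. Qed.

Lemma hscale1 x : hscale 1 x = x.
Proof. by case: x => [[[a b] c] d] /=; rewrite !mul1r. Qed.

Lemma hmull_bij b : hnorm b = 1 -> bijective (hmul b).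
Proof.
move=> Nb; exists (hmul (hconj b)) => x.
  by rewrite hmulA hmul_conjl Nb hscale1 hmul1x.
by rewrite hmulA hmul_conjr Nb hscale1 hmul1x.
Qed.

Lemma hmulr_bij b : hnorm b = 1 -> bijective (hmul^~ b).
Proof.
move=> Nb; exists (hmul^~ (hconj b)) => x /=.
  by rewrite -hmulA hmul_conjr Nb hscale1 hmulx1.
by rewrite -hmulA hmul_conjl Nb hscale1 hmulx1.
Qed.

End Coordinates.

Section Reduction.
Variables (S T : comNzRingType) (f : {rmorphism S -> T}).

Lemma hmapM x y : hmap f (hmul x y) = hmul (hmap f x) (hmap f y).
Proof.
case: x y => [[[a b] c] d] [[[a' b'] c'] d'] /=.
by rewrite !(rmorphB, rmorphD, rmorphM).
Qed.

Lemma hnorm_map x : hnorm (hmap f x) = f (hnorm x).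
Proof. by case: x => [[[a b] c] d] /=; rewrite !(rmorphD, rmorphM). Qed.

End Reduction.

Definition hred2 : hcoord int -> hcoord 'Z_2 := hmap intr.

Definition Ucoords : 12.-tuple (hcoord int) :=
  [tuple (1, 0, 0, 0); (0, 1, 0, 0); (0, 0, 1, 0); (0, 0, 0, 1);
         (-1, 0, 1, 0); (0, -1, 1, 0); (0, 0, -1, 1); (-1, 0, 0, 1);
         (0, -1, 0, 1); (-1, -1, 1, 0); (-1, -1, 0, 1); (-1, -1, 1, 1)].

Lemma hnorm_Z2_eq1 (x : hcoord 'Z_2) : (hnorm x == 1) = (x \in map hred2 Ucoords).
Proof.
case: x => [[[a b] c] d].
by case: (Z2_eq01 a) => ->; case: (Z2_eq01 b) => ->;
   case: (Z2_eq01 c) => ->; case: (Z2_eq01 d) => ->.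
Qed.

Lemma hnorm_Z2_eq1P (x : hcoord 'Z_2) :
  reflect (exists i : 'I_12, x = hred2 (tnth Ucoords i)) (hnorm x == 1).
Proof.
rewrite hnorm_Z2_eq1; apply: (iffP (tnthP (map_tuple hred2 Ucoords) x)).
  by move=> -[i ->]; exists i; rewrite tnth_map.
by move=> -[i ->]; exists i; rewrite tnth_map.
Qed.

Section Embedding.
Variable R : rcfType.
Local Notation s := (Num.sqrt (2 : R)).

Lemma sqrt2_sq : s * s = 2.
Proof. by rewrite -expr2 sqr_sqrtr // ler0n. Qed.

Definition hquat (z : hcoord int) : quat R :=
  let: (a, b, c, d) := z in
  Quat (a%:~R + (c%:~R + d%:~R) / 2) (b%:~R + (c%:~R + d%:~R) / 2)
       (c%:~R * s / 2) (d%:~R * s / 2).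

Lemma hquatE (a b c d : int) :
  hquat (a, b, c, d) = qadd (qadd (qscale a%:~R (v1 R)) (qscale b%:~R (v2 R)))
                            (qadd (qscale c%:~R (v3 R)) (qscale d%:~R (v4 R))).
Proof. by rewrite /= /qscale /qadd /=; congr Quat; field. Qed.

Lemma inH_hquat (x : quat R) : inH x <-> exists z, x = hquat z.
Proof.
split=> [[a [b [c [d ->]]]] | [[[[a b] c] d] ->]].
  by exists (a, b, c, d); rewrite hquatE.
by exists a, b, c, d; rewrite hquatE.
Qed.

Lemma hquat_inj : injective hquat.
Proof.
move=> [[[a b] c] d] [[[a' b'] c'] d'] [+ + ec ed].
have s2_neq0 : s / 2 != 0 by rewrite gt_eqF // divr_gt0 ?sqrtr_gt0 ?ltr0n.
move: ec ed; rewrite -!mulrA => /(mulIf s2_neq0)/intr_inj<- /(mulIf s2_neq0)/intr_inj<-.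
by move=> /addIr/intr_inj-> /addIr/intr_inj->.
Qed.

Lemma hquatM z w : qmul (hquat z) (hquat w) = hquat (hmul z w).
Proof.
case: z w => [[[a b] c] d] [[[a' b'] c'] d'].
rewrite /qmul /=; congr Quat; rewrite !(rmorphB, rmorphD, rmorphM) /=.
all: by field: sqrt2_sq.
Qed.

Lemma hquatN z : qN (hquat z) = qreal (hnorm z)%:~R.
Proof.
case: z => [[[a b] c] d]; rewrite /qN /qmul /qconj /qreal /=.
by congr Quat; rewrite ?rmorphD ?rmorphM /=; field: sqrt2_sq.
Qed.

Lemma hquatB z w : qsub (hquat z) (hquat w) = hquat (hsub z w).
Proof.
case: z w => [[[a b] c] d] [[[a' b'] c'] d'].
by rewrite /qsub /qadd /qopp /=; congr Quat; rewrite !rmorphB /=; field.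
Qed.

Lemma hquatZ (k : int) z : qscale k%:~R (hquat z) = hquat (hscale k z).
Proof.
case: z => [[[a b] c] d].
by rewrite /qscale /=; congr Quat; rewrite !rmorphM /=; field.
Qed.

Lemma cong2_hquat z w : cong2 (hquat z) (hquat w) <-> hred2 z = hred2 w.
Proof.
case: z w => [[[a b] c] d] [[[a' b'] c'] d']; split.
  move=> [_ [/inH_hquat [[[[x y] u] v] ->]]].
  rewrite hquatB -[2]/(2%:~R) hquatZ => /hquat_inj [ea eb ec ed].
  by congr (_, _, _, _); apply/eqP; rewrite intr_Z2_eq ?ea ?eb ?ec ?ed dvdz_mulr.
move=> [/eqP + /eqP + /eqP + /eqP]; rewrite !intr_Z2_eq.
move=> /dvdzP [x ea] /dvdzP [y eb] /dvdzP [u ec] /dvdzP [v ed].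
exists (hquat (x, y, u, v)); split; first by apply/inH_hquat; exists (x, y, u, v).
by rewrite hquatB -[2]/(2%:~R) hquatZ /= ea eb ec ed ![2 * _]mulrC.
Qed.

Lemma U_hquat (i : 'I_12) : U R i = hquat (tnth Ucoords i).
Proof.
rewrite /U; have -> : Ulist R = map hquat Ucoords.
  by rewrite /Ulist /=; congr [:: _; _; _; _; _; _; _; _; _; _; _; _];
    rewrite /qsub /qadd /qopp /v1 /v2 /v3 /v4 /=; congr Quat; field.
by rewrite (nth_map (hone int)) ?size_tuple // (tnth_nth (hone int)).
Qed.

Lemma induces_perm_U_hcoord (f : quat R -> quat R) (g : hcoord int -> hcoord int)
    (g2 : hcoord 'Z_2 -> hcoord 'Z_2) :
  (forall z, f (hquat z) = hquat (g z)) -> (forall z, hred2 (g z) = g2 (hred2 z)) ->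
  bijective g2 -> (forall x, hnorm (g2 x) = hnorm x) ->
  induces_perm_U f.
Proof.
move=> fE gE [g2inv g2K g2invK] g2N.
have hnorm_U i : hnorm (hred2 (tnth Ucoords i)) == 1 by apply/hnorm_Z2_eq1P; exists i.
split; [|split; [|split]].
- move=> x y /inH_hquat [z ->] /inH_hquat [w ->] /cong2_hquat zw.
  by rewrite !fE; apply/cong2_hquat; rewrite !gE zw.
- move=> i; have /hnorm_Z2_eq1P [j ej] : hnorm (g2 (hred2 (tnth Ucoords i))) == 1.
    by rewrite g2N hnorm_U.
  by exists j; rewrite !U_hquat fE; apply/cong2_hquat; rewrite gE ej.
- move=> i j; rewrite !U_hquat !fE => /cong2_hquat.
  by rewrite !gE => /(can_inj g2K)/cong2_hquat.
- move=> j; have /hnorm_Z2_eq1P [i ei] : hnorm (g2inv (hred2 (tnth Ucoords j))) == 1.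
    by rewrite -g2N g2invK hnorm_U.
  by exists i; rewrite !U_hquat fE; apply/cong2_hquat; rewrite gE -ei g2invK.
Qed.

End Embedding.

Theorem lemma8 (R : rcfType) (b : quat R) :
  inH b -> odd_norm b ->
  induces_perm_U (fun x => qmul b x) /\ induces_perm_U (fun x => qmul x b).
Proof.
move=> /inH_hquat [zb ->] [n [n_odd Nb]].
have Nzb : hnorm zb = n by move: Nb; rewrite hquatN => -[/intr_inj].
have Nzb2 : hnorm (hred2 zb) = 1 by rewrite hnorm_map Nzb; apply: intr_Z2_odd.
split.
- apply: (induces_perm_U_hcoord (g := hmul zb) (g2 := hmul (hred2 zb))).
  + by move=> z; rewrite hquatM.
  + by move=> z; apply: hmapM.
  + exact: hmull_bij.
  + by move=> x; rewrite hnormM Nzb2 mul1r.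
- apply: (induces_perm_U_hcoord (g := fun z => hmul z zb)
                                 (g2 := fun x => hmul x (hred2 zb))).
  + by move=> z; rewrite hquatM.
  + by move=> z; apply: hmapM.
  + exact: hmulr_bij.
  + by move=> x; rewrite hnormM Nzb2 mulr1.
Qed.
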